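(* Let $q\ge2$ be a prime power, $d\ge6$, $2\le j\le d$ and $1\le i\le d-3$, and let $h_{\max}=\min\{j,d-i\}$. Then $$|Q_j(i)-T_{h_{\max}}(i,j)|\le\begin{cases}|T_0(i,j)|+|T_1(i,j)|+\dots+|T_{j-1}(i,j)|, & \text{if } j\le d-i-1,\\ |T_{d-i-2}(i,j)|+|T_{d-i-1}(i,j)|, & \text{if } j\ge d-i.\end{cases}$$
   Context: Let $b=-q$. For integers $m\ge0$ and $l$, ${m\brack l}_b=\prod_{t=1}^{l}\frac{b^{m-t+1}-1}{b^t-1}$ for $l\ge0$ and $0$ for $l<0$. For $0\le i,j\le d$, $$Q_j(i)=\sum_{h=0}^{\min\{j,d-i\}}(-1)^j(-q)^{\binom{j-h}{2}+hd}{d-h\brack d-j}_b{d-i\brack h}_b,$$ the eigenvalues of the Hermitian forms graph $Q_q(d,j)$. $T_h(i,j)$ denotes the $h$-th summand (including the factor $(-1)^j$). *)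

From mathcomp Require Import all_boot all_order all_algebra.
Set Implicit Arguments. Unset Strict Implicit. Unset Printing Implicit Defensive.
Import Order.TTheory GRing.Theory Num.Theory.
Local Open Scope ring_scope.

Definition prime_power (q : nat) : Prop :=
  exists p k : nat, [/\ prime p, (0 < k)%N & q = (p ^ k)%N].

(* Gaussian binomial [m l]_b for l >= 0 (the case l < 0, where it is 0,
   never occurs below), computed in rat:
   prod_{t=1}^{l} (b^(m-t+1) - 1) / (b^t - 1).
   The exponent m - t + 1 is written (m.+1 - t) so that it is exact for
   t <= m+1; for t > m+1 the product already contains the zero factor
   at t = m+1. *)
Definition gbin (b : rat) (m l : nat) : rat :=
  \prod_(1 <= t < l.+1) ((b ^+ (m.+1 - t) - 1) / (b ^+ t - 1)).

(* h-th summand T_h(i,j) of Q_j(i), including the factor (-1)^j, b = -q *)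
Definition Tterm (q d i j h : nat) : rat :=
  (-1) ^+ j * (- (q%:R : rat)) ^+ ('C(j - h, 2) + h * d)%N
  * gbin (- (q%:R)) (d - h) (d - j) * gbin (- (q%:R)) (d - i) h.

Definition Qeig (q d i j : nat) : rat :=
  \sum_(0 <= h < (minn j (d - i)).+1) Tterm q d i j h.

From mathcomp Require Import all_boot all_order all_algebra.
From mathcomp Require Import ring lra zify.
Set Implicit Arguments. Unset Strict Implicit. Unset Printing Implicit Defensive.
Import Order.TTheory GRing.Theory Num.Theory.
Local Open Scope ring_scope.

(* Write n = d - i and T_h = T_h(i,j).  If j < n then h_max = j and the claim
   is the triangle inequality for Q_j(i) - T_j = sum_{h<j} T_h.  Otherwise
   h_max = n and we must bound the sum S = sum_{h<n} T_h.  The key fact is an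
   explicit ratio between consecutive terms: with b = -q,
     T_{h+1} / T_h = N_h / D_h,
     N_h = b^(d-j+h+1) (b^(j-h) - 1) (b^(n-h) - 1),
     D_h = (b^(d-h) - 1) (b^(h+1) - 1),
   obtained from the shift identities of the Gaussian binomials.  Counting
   signs, N_h D_h has the sign of (-1)^(n-h); comparing sizes, |N_h| >= 2 |D_h|
   as soon as h + 3 <= n (and n < d).  Hence the moduli |T_h| at least double
   up to h = n - 2, so sum_{h<n-3} |T_h| <= |T_{n-3}|, while the ratio
   T_{n-2}/T_{n-3} is <= -2 and T_{n-1}/T_{n-2} is >= 0.  An elementary
   inequality on reals then gives |S| <= |T_{n-2}| + |T_{n-1}|. *)

Section SignedPowers.
Variable R : realFieldType.
Implicit Types x : R.

Lemma sign_cases k : (-1) ^+ k = 1 :> R \/ (-1) ^+ k = -1 :> R.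
Proof. by rewrite -signr_odd; case: (odd k); [right|left]. Qed.

Lemma sign_double k : (-1) ^+ (k + k) = 1 :> R.
Proof. by rewrite -signr_odd oddD addbb. Qed.

Lemma oppX_sub1 x k : (-x) ^+ k - 1 = (-1) ^+ k * (x ^+ k - (-1) ^+ k).
Proof. by rewrite (exprNn x); case: (sign_cases k) => ->; ring. Qed.

Lemma powm_bounds x k : 2 <= x -> (0 < k)%N ->
  [/\ 0 < x ^+ k - (-1) ^+ k, x ^+ k - 1 <= x ^+ k - (-1) ^+ k
    & x ^+ k - (-1) ^+ k <= x ^+ k + 1].
Proof.
move=> hx; case: k => // k _.
have h1 : 1 <= x ^+ k by apply: exprn_ege1; lra.
have h2 : 2 <= x ^+ k.+1 by rewrite exprS; nra.
by case: (sign_cases k.+1) => ->; split; lra.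
Qed.

Lemma norm_oppX_sub1 x k : 2 <= x -> (0 < k)%N ->
  `|(-x) ^+ k - 1| = x ^+ k - (-1) ^+ k.
Proof.
move=> hx hk; have [pos _ _] := powm_bounds hx hk.
by rewrite oppX_sub1 normrM normr_sign mul1r ger0_norm // ltW.
Qed.

Lemma oppX_sub1_neq0 x k : 2 <= x -> (0 < k)%N -> (-x) ^+ k - 1 != 0.
Proof. by move=> hx hk; rewrite -normr_gt0 norm_oppX_sub1 //; case: (powm_bounds hx hk). Qed.

(* Exponents >= 3 give powers >= 8; this is where h + 3 <= n is used. *)
Lemma expr_ge8 x k : 2 <= x -> (3 <= k)%N -> 8 <= x ^+ k.
Proof.
move=> hx hk; rewrite -(subnK hk) exprD.
have h1 : 1 <= x ^+ (k - 3) by apply: exprn_ege1; lra.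
have h3 : 8 <= x ^+ 3 by rewrite !exprS expr0; nra.
nra.
Qed.

End SignedPowers.

Section RealInequalities.
Variable R : realFieldType.

Lemma ratio_le_m2 (N D : R) : D != 0 -> N * D < 0 -> 2 * `|D| <= `|N| -> N / D <= -2.
Proof.
move=> D0 ND hN; case: (ltgtP D 0) => [Dn|Dp|De]; last by rewrite De eqxx in D0.
- have Np : 0 < N by nra.
  rewrite (ltr0_norm Dn) (gtr0_norm Np) in hN; rewrite ler_ndivrMr //; lra.
- have Nn : N < 0 by nra.
  rewrite (gtr0_norm Dp) (ltr0_norm Nn) in hN; rewrite ler_pdivrMr //; lra.
Qed.

Lemma ratio_ge0 (N D : R) : D != 0 -> 0 < N * D -> 0 <= N / D.
Proof.
move=> D0 ND; have -> : N / D = (N * D) / (D * D) by field.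
by apply: divr_ge0; [lra | rewrite -expr2 sqr_ge0].
Qed.

Lemma sum_le_last (T : nat -> R) m :
  (forall h, (h < m)%N -> 2 * `|T h| <= `|T h.+1|) ->
  forall k, (k <= m)%N -> \sum_(0 <= h < k) `|T h| <= `|T k|.
Proof.
move=> dbl; elim=> [|k IH] hk; first by rewrite big_geq.
rewrite big_nat_recr //=; have := IH (ltnW hk); have := dbl k hk; lra.
Qed.

(* The final estimate: with t, t r1, t r1 r2 three consecutive terms where
   r1 <= -2 and r2 >= 0, a head S with |S| <= |t| is absorbed, so the whole
   sum is bounded by the moduli of the last two terms. *)
Lemma sign_change_bound (S t r1 r2 : R) : r1 <= -2 -> 0 <= r2 -> `|S| <= `|t| ->
  `|S + t + t * r1 + t * r1 * r2| <= `|t * r1| + `|t * r1 * r2|.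
Proof.
move=> h1 h2 hS.
have -> : S + t + t * r1 + t * r1 * r2 = S + t * (1 - (- r1 * (1 + r2))) by ring.
have -> : `|t * r1| + `|t * r1 * r2| = `|t| * (- r1 * (1 + r2)).
  by rewrite !normrM (ler0_norm (x := r1)) ?(ger0_norm (x := r2)); [ring|lra|lra].
apply: le_trans (ler_normD _ _) _.
have hK : 2 <= - r1 * (1 + r2) by nra.
rewrite normrM (ler0_norm (x := 1 - _)); last by lra.
have := normr_ge0 t; nra.
Qed.

(* Numerical core of |N_h| >= 2 |D_h|: D_h has factors of size about P X and
   E, N_h has size about P E X Y with X, Y >= 8. *)
Lemma big_over_small (P E X Y u v w z : R) : 1 <= P -> 2 <= E -> 8 <= X -> 8 <= Y ->
  X - 1 <= u -> Y - 1 <= v -> 0 <= w <= P * X + 1 -> 0 <= z <= E + 1 ->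
  2 * (w * z) <= P * E * u * v.
Proof.
move=> hP hE hX hY hu hv /andP[hw0 hw] /andP[hz0 hz].
have hPE : 0 <= P * E by apply: mulr_ge0; lra.
have small : w * z <= (P * X + 1) * (E + 1) by apply: ler_pM.
have big : P * E * (X - 1) * (Y - 1) <= P * E * u * v.
  apply: ler_pM; [|lra|by apply: ler_wpM2l; lra|lra].
  by apply: mulr_ge0; lra.
have gap : 2 * ((P * X + 1) * (E + 1)) <= P * E * (X - 1) * (Y - 1).
  have h7 : 7 * (P * E * (X - 1)) <= P * E * (X - 1) * (Y - 1).
    have : 0 <= P * E * (X - 1) * (Y - 8) by apply: mulr_ge0; [apply: mulr_ge0|]; lra.
    nra.
  have : 0 <= (P * E) * (X - 8) by apply: mulr_ge0; lra.
  have : 0 <= (P * X) * (E - 2) by apply: mulr_ge0; [apply: mulr_ge0|]; lra.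
  have : 0 <= (P - 1) * E by apply: mulr_ge0; lra.
  nra.
nra.
Qed.

End RealInequalities.

Lemma gbinS (b : rat) m l :
  gbin b m l.+1 = gbin b m l * ((b ^+ (m - l) - 1) / (b ^+ l.+1 - 1)).
Proof. by rewrite /gbin big_nat_recr //= subSS. Qed.

Lemma gbin_shift (b : rat) m l : (l <= m)%N ->
  gbin b m.+1 l * (b ^+ (m.+1 - l) - 1) = gbin b m l * (b ^+ m.+1 - 1).
Proof.
elim: l => [|l IH] hl; first by rewrite /gbin !big_geq // subn0.
rewrite !gbinS subSS.
transitivity ((gbin b m.+1 l * (b ^+ (m.+1 - l) - 1)) *
   ((b ^+ (m - l) - 1) / (b ^+ l.+1 - 1))); first by ring.
by rewrite IH ?(ltnW hl) //; ring.
Qed.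

Section TermRatios.
Variables q d i j : nat.
Hypotheses (q_ge2 : (2 <= q)%N) (j_le_d : (j <= d)%N) (n_le_j : (d - i <= j)%N).

Local Notation x := (q%:R : rat).
Local Notation T := (Tterm q d i j).

Let x_ge2 : 2 <= x. Proof. by rewrite (ler_nat rat 2 q). Qed.

Definition ratio_num (h : nat) : rat :=
  (- x) ^+ (d - j + h.+1) * ((- x) ^+ (j - h) - 1) * ((- x) ^+ (d - i - h) - 1).
Definition ratio_den (h : nat) : rat :=
  ((- x) ^+ (d - h) - 1) * ((- x) ^+ h.+1 - 1).

Lemma ratio_den_neq0 h : (h < d)%N -> ratio_den h != 0.
Proof. by move=> hd; rewrite mulf_neq0 // oppX_sub1_neq0 // subn_gt0. Qed.

Lemma Tterm_succ h : (h < d - i)%N -> T h.+1 * ratio_den h = T h * ratio_num h.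
Proof.
move=> hn; rewrite /Tterm /ratio_num /ratio_den.
set b := - x.
have shift1 : gbin b (d - h.+1) (d - j) * (b ^+ (d - h) - 1) =
              gbin b (d - h) (d - j) * (b ^+ (j - h) - 1).
  have := gbin_shift b (ltac:(lia) : (d - j <= d - h.+1)%N).
  have -> : (d - h.+1).+1 = (d - h)%N by lia.
  by have -> : (d - h - (d - j) = j - h)%N by lia.
have shift2 : gbin b (d - i) h.+1 * (b ^+ h.+1 - 1) = gbin b (d - i) h * (b ^+ (d - i - h) - 1).
  by rewrite gbinS mulrA divfK // oppX_sub1_neq0.
have expo : b ^+ ('C(j - h.+1, 2) + h.+1 * d) =
            b ^+ ('C(j - h, 2) + h * d) * b ^+ (d - j + h.+1).
  rewrite -exprD; congr (_ ^+ _).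
  have -> : (j - h = (j - h.+1).+1)%N by lia.
  rewrite binS bin1; lia.
rewrite expo.
transitivity ((-1) ^+ j * b ^+ ('C(j - h, 2) + h * d) * b ^+ (d - j + h.+1) *
  (gbin b (d - h.+1) (d - j) * (b ^+ (d - h) - 1)) *
  (gbin b (d - i) h.+1 * (b ^+ h.+1 - 1))); first by ring.
by rewrite shift1 shift2; ring.
Qed.

Lemma ratio_sign h : (h < d - i)%N ->
  0 < (-1) ^+ (d - i - h) * (ratio_num h * ratio_den h).
Proof.
move=> hn; have x2 := x_ge2.
rewrite /ratio_num /ratio_den !oppX_sub1 (exprNn x).
have [pa _ _] := powm_bounds (k := (j - h)) x_ge2 ltac:(lia).
have [pc _ _] := powm_bounds (k := (d - i - h)) x_ge2 ltac:(lia).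
have [pe _ _] := powm_bounds (k := (d - h)) x_ge2 ltac:(lia).
have [pf _ _] := powm_bounds (k := h.+1) x_ge2 ltac:(lia).
have px : 0 < x ^+ (d - j + h.+1) by apply: exprn_gt0; lra.
have signs : (-1) ^+ (d - i - h) * (-1) ^+ (d - j + h.+1) * (-1) ^+ (j - h) *
   (-1) ^+ (d - i - h) * (-1) ^+ (d - h) * (-1) ^+ h.+1 = 1 :> rat.
  rewrite -!exprD.
  have -> : ((d - i - h) + (d - j + h.+1) + (j - h) + (d - i - h) + (d - h) + h.+1 =
     ((d - i - h) + d.+1) + ((d - i - h) + d.+1))%N by lia.
  exact: sign_double.
set A := x ^+ (d - j + h.+1). set a := x ^+ (j - h) - _.
set c := x ^+ (d - i - h) - _. set e := x ^+ (d - h) - _. set f := x ^+ h.+1 - _.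
rewrite (_ : (-1) ^+ (d - i - h) * _ = A * a * c * (e * f)); last first.
  by rewrite -[RHS]mul1r -[1 in RHS]signs; ring.
by rewrite !mulr_gt0.
Qed.

Lemma ratio_mag h : (h + 3 <= d - i)%N -> (d - i < d)%N ->
  2 * `|ratio_den h| <= `|ratio_num h|.
Proof.
move=> hn nd; have x2 := x_ge2.
rewrite /ratio_num /ratio_den !normrM normrX normrN (@ger0_norm _ x); last by lra.
rewrite !norm_oppX_sub1 //; try lia.
have -> : x ^+ (d - j + h.+1) = x ^+ (d - j) * x ^+ h.+1 by rewrite exprD.
have [_ a1 _] := powm_bounds (k := (j - h)) x_ge2 ltac:(lia).
have [_ c1 _] := powm_bounds (k := (d - i - h)) x_ge2 ltac:(lia).
have [e0 _ e1] := powm_bounds (k := (d - h)) x_ge2 ltac:(lia).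
have [f0 _ f1] := powm_bounds (k := h.+1) x_ge2 ltac:(lia).
have split_dh : x ^+ (d - h) = x ^+ (d - j) * x ^+ (j - h).
  by rewrite -exprD; congr (_ ^+ _); lia.
rewrite split_dh in e0 e1 *.
apply: (big_over_small (X := x ^+ (j - h)) (Y := x ^+ (d - i - h))) => //.
- by apply: exprn_ege1; lra.
- by have := exprn_ege1 h (_ : 1 <= x); rewrite exprS; nra.
- by apply: expr_ge8 => //; lia.
- by apply: expr_ge8 => //; lia.
- by rewrite ltW.
- by rewrite ltW.
Qed.

Lemma Tterm_ratio h : (h < d - i)%N -> T h.+1 = T h * (ratio_num h / ratio_den h).
Proof.
move=> hn; have D0 : ratio_den h != 0 by apply: ratio_den_neq0; lia.
by rewrite mulrA -Tterm_succ // mulfK.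
Qed.

Lemma Tterm_doubling h : (h + 3 <= d - i)%N -> (d - i < d)%N ->
  2 * `|T h| <= `|T h.+1|.
Proof.
move=> hn nd; rewrite Tterm_ratio; last lia.
rewrite (normrM (T h)) normf_div mulrA ler_pdivlMr; last first.
  by rewrite normr_gt0 ratio_den_neq0 //; lia.
have := ratio_mag hn nd; have := normr_ge0 (T h); nra.
Qed.

Lemma head_sum_bound : (3 <= d - i)%N -> (d - i < d)%N ->
  `|\sum_(0 <= h < d - i) T h| <= `|T (d - i - 2)| + `|T (d - i - 1)|.
Proof.
move=> n3 nd; have [m en] : exists m, (d - i = m.+3)%N by exists (d - i - 3)%N; lia.
rewrite en /= !subSS subn0 !big_nat_recr //=.
rewrite (Tterm_ratio (h := m.+1) ltac:(lia)) (Tterm_ratio (h := m) ltac:(lia)).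
have den0 k : (k <= m.+1)%N -> ratio_den k != 0 by move=> hk; apply: ratio_den_neq0; lia.
apply: sign_change_bound.
- apply: ratio_le_m2; first exact: den0.
    have := ratio_sign (h := m) ltac:(lia).
    have -> : (d - i - m = 3)%N by lia.
    by rewrite -signr_odd /= expr1; lra.
  by apply: ratio_mag; lia.
- apply: ratio_ge0; first exact: den0.
  have := ratio_sign (h := m.+1) ltac:(lia).
  have -> : (d - i - m.+1 = 2)%N by lia.
  by rewrite -signr_odd /= expr0; lra.
- apply: le_trans (ler_norm_sum _ _ _) _.
  by apply: (sum_le_last (m := m)) => // h hm; apply: Tterm_doubling; lia.
Qed.

End TermRatios.

Theorem lemma5p3 (q d i j : nat) :
  prime_power q -> (2 <= q)%N -> (6 <= d)%N ->
  (2 <= j <= d)%N -> (1 <= i <= d - 3)%N ->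
  `| Qeig q d i j - Tterm q d i j (minn j (d - i)) | <=
  (if (j <= d - i - 1)%N
   then \sum_(0 <= h < j) `| Tterm q d i j h |
   else `| Tterm q d i j (d - i - 2) | + `| Tterm q d i j (d - i - 1) |).
Proof.
move=> _ q_ge2 _ /andP[_ j_le_d] /andP[i_ge1 i_le].
rewrite /Qeig big_nat_recr //= addrK; case: ifP => j_lt_n.
  have -> : minn j (d - i) = j by apply/minn_idPl; lia.
  exact: ler_norm_sum.
have -> : minn j (d - i) = (d - i)%N by apply/minn_idPr; lia.
by apply: head_sum_bound => //; lia.
Qed.
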